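(* For $n\ge2$, the sets $\widetilde{\mathbb G}_n$ and $\widetilde\Gamma_n$ are both starlike about $(0,\dots,0)$ but neither is circular. Consequently $\widetilde{\mathbb G}_n$ is simply connected.
   Context: $\mathbb D$ is the open unit disc. $\widetilde{\mathbb G}_n=\{(y_1,\dots,y_{n-1},q)\in\mathbb C^n: q\in\mathbb D,\ y_j=\beta_j+\bar\beta_{n-j}q$ for some $\beta_j\in\mathbb C$ with $|\beta_j|+|\beta_{n-j}|<\binom{n}{j}$, $j=1,\dots,n-1\}$; $\widetilde\Gamma_n$ is its closure. A set $S$ is starlike about $z_0\in S$ if for every $z\in S$ the segment from $z_0$ to $z$ lies in $S$. A set $S\subset\mathbb C^n$ is circular if $z\in S$ implies $e^{i\theta}z\in S$ for all $\theta\in[0,2\pi)$. *)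

From HB Require Import structures.
From mathcomp Require Import all_boot all_order all_algebra.
From mathcomp Require Import all_classical all_reals all_analysis.
From mathcomp Require Import complex.
Set Implicit Arguments. Unset Strict Implicit. Unset Printing Implicit Defensive.
Import Order.TTheory GRing.Theory Num.Theory.
Import numFieldNormedType.Exports.
Local Open Scope classical_set_scope.
Local Open Scope ring_scope.

Section Defs.
Variable R : realType.
Local Notation C := ((R[i])^o).
Definition conjC (x : C) : C := @Num.conj (R[i]) x.

(* the k-th coordinate (0-based) of z in C^n, or 0 if k >= n *)
Definition vcoord (n : nat) (z : 'rV[C]_n) (k : nat) : C :=
  if insub k is Some i then z ord0 i else 0.

(* The point (y_1,...,y_{n-1},q) in C^n is the row vector z with
   y_j = vcoord z (j-1) and q = vcoord z (n-1). *)
Definition Gtilde (n : nat) : set 'rV[C]_n :=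
  [set z | `|vcoord z n.-1| < 1 /\
     exists beta : nat -> C,
       forall j : nat, (1 <= j <= n.-1)%N ->
         `|beta j| + `|beta (n - j)%N| < ('C(n, j))%:R /\
         vcoord z j.-1 = beta j + conjC (beta (n - j)%N) * vcoord z n.-1].

Definition Gammatilde (n : nat) : set 'rV[C]_n := closure (@Gtilde n).

Definition starlike (n : nat) (S : set 'rV[C]_n) (z0 : 'rV[C]_n) : Prop :=
  S z0 /\ forall z, S z -> forall t : R, 0 <= t <= 1 ->
    S (((1 - t)%:C)%C *: z0 + ((t%:C)%C) *: z).

Definition expi (theta : R) : C := (cos theta +i* sin theta)%C.

Definition circular (n : nat) (S : set 'rV[C]_n) : Prop :=
  forall z, S z -> forall theta : R, S (expi theta *: z).

Definition simply_connected (n : nat) (S : set 'rV[C]_n) : Prop :=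
  S !=set0 /\
  (forall x y, S x -> S y -> exists f : R -> 'rV[C]_n,
     {within `[0, 1], continuous f} /\ f 0 = x /\ f 1 = y /\
     (forall s, s \in `[0, 1] -> S (f s))) /\
  (forall g : R -> 'rV[C]_n,
     {within `[0, 1], continuous g} -> g 0 = g 1 ->
     (forall s, s \in `[0, 1] -> S (g s)) ->
     exists H : R * R -> 'rV[C]_n,
       {within `[0, 1] `*` `[0, 1], continuous H} /\
       (forall s, s \in `[0, 1] -> H (s, 0) = g s /\ H (s, 1) = g 0) /\
       (forall t, t \in `[0, 1] -> H (0, t) = g 0 /\ H (1, t) = g 0) /\
       (forall p, p \in `[0, 1] `*` `[0, 1] -> S (H p))).
End Defs.
Arguments Gtilde R n : clear implicits.
Arguments Gammatilde R n : clear implicits.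

From HB Require Import structures.
From mathcomp Require Import all_boot all_order all_algebra.
From mathcomp Require Import all_classical all_reals all_analysis.
From mathcomp Require Import complex.
From mathcomp Require Import ring lra zify.
Import Order.TTheory GRing.Theory Num.Theory.
Import numFieldNormedType.Exports.
Local Open Scope classical_set_scope.
Local Open Scope ring_scope.

(* If [z] lies in [Gtilde] with data [q], [beta], then so does [t z] for
   [t] in [[0, 1]]: its data are [t q] and real combinations
   [a beta_j + b conj(beta_(n-j)) q], where [(a, b)] is chosen to satisfy the
   defining relations and [a + b |q| <= 1] keeps the bounds on [beta].  Hence
   [Gtilde] and its closure are starlike about [0], and any set closed under
   such scalings is simply connected: a loop is contracted by a homotopy each
   of whose values is a scaling of a point of the loop.  Neither set is
   circular because [|y_1 - conj(y_(n-1)) q| + |y_(n-1) - conj(y_1) q|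
   + n |q|^2] is at most [n] on the closure of [Gtilde], but exceeds [n] at
   [-z] for a suitable [z] in [Gtilde]. *)

Lemma closure_subset_preimage {T U : topologicalType} {f : T -> U}
    {A : set T} {B : set U} :
  continuous f -> A `<=` f @^-1` B -> closure A `<=` f @^-1` closure B.
Proof.
move=> cf AB; have cl : closed (f @^-1` closure B).
  by apply: preimage_closed => [x _|]; [exact: cf | exact: closed_closure].
rewrite [X in _ `<=` X](closure_id _).1 //; apply: closureS.
by move=> x /AB; exact: (@subset_closure _ B).
Qed.

Lemma continuous_comp_within {S T U : topologicalType} {A : set T}
    {g : T -> U} {c : S -> T} :
  {within A, continuous g} -> continuous c -> (forall x, A (c x)) ->
  continuous (g \o c).
Proof.
move=> /subspace_continuousP gc cc cA x.
suff c_within : c @ x --> within A (nbhs (c x)).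
  exact: cvg_comp c_within (gc _ (cA x)).
move=> P AP; have cAP : nbhs x [set y | A (c y) -> P (c y)] := cc x _ AP.
by change (nbhs x [set y | P (c y)]); apply: filterS cAP => y; apply; exact: cA.
Qed.

(* [continuousD] and friends conclude on [f + g], [f - g], [f \* g], which
   [apply] does not match against an explicit lambda; the point [x] is made
   explicit so that it fixes the topology of the domain. *)
Section PointwiseContinuity.
Context {T : topologicalType} (x : T).

Section Real.
Context {R : realType}.
Implicit Types f g : T -> R.

Lemma continuousD_real {f g} : {for x, continuous f} -> {for x, continuous g} ->
  {for x, continuous (fun y => f y + g y)}.
Proof. exact: continuousD. Qed.

Lemma continuousB_real {f g} : {for x, continuous f} -> {for x, continuous g} ->
  {for x, continuous (fun y => f y - g y)}.
Proof. exact: continuousB. Qed.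

Lemma continuousM_real {f g} : {for x, continuous f} -> {for x, continuous g} ->
  {for x, continuous (fun y => f y * g y)}.
Proof. exact: continuousM. Qed.

Lemma continuous_max_real {f g} : {for x, continuous f} -> {for x, continuous g} ->
  {for x, continuous (fun y => Num.max (f y) (g y))}.
Proof. exact: continuous_max. Qed.

Lemma continuous_min_real {f g} : {for x, continuous f} -> {for x, continuous g} ->
  {for x, continuous (fun y => Num.min (f y) (g y))}.
Proof. exact: continuous_min. Qed.

Local Notation C := ((R[i])^o).

Lemma continuousB_cplx {f g : T -> C} :
  {for x, continuous f} -> {for x, continuous g} ->
  {for x, continuous (fun y => f y - g y)}.
Proof. exact: continuousB. Qed.

Lemma continuousM_cplx {f g : T -> C} :
  {for x, continuous f} -> {for x, continuous g} ->
  {for x, continuous (fun y => f y * g y)}.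
Proof. exact: continuousM. Qed.

End Real.

Context {K : numFieldType} {V : normedModType K}.

Lemma continuousD_vec {f g : T -> V} :
  {for x, continuous f} -> {for x, continuous g} ->
  {for x, continuous (fun y => f y + g y)}.
Proof. exact: continuousD. Qed.

Lemma continuousZ_vec {s : T -> K} {f : T -> V} :
  {for x, continuous s} -> {for x, continuous f} ->
  {for x, continuous (fun y => s y *: f y)}.
Proof. exact: continuousZ. Qed.

End PointwiseContinuity.

Section ComplexScalars.
Context {R : realType}.
Local Notation C := ((R[i])^o).

Definition cabs (x : C) : R := complex.Re `|x|.

Lemma normcE (x : C) : `|x| = (cabs x)%:C%C.
Proof. by rewrite RRe_real // normr_real. Qed.

Lemma cabs_ge0 (x : C) : 0 <= cabs x.
Proof. by rewrite -(@lecR R 0) -normcE; exact: normr_ge0. Qed.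

Lemma normc_real (r : R) : `|(r%:C)%C : C| = (`|r|%:C)%C.
Proof. by rewrite normc_def /= expr0n addr0 sqrtr_sqr. Qed.

Lemma cabs_real (r : R) : cabs (r%:C)%C = `|r|.
Proof. by rewrite /cabs normc_real. Qed.

Lemma cabsM (x y : C) : cabs (x * y) = cabs x * cabs y.
Proof. by rewrite /cabs normrM (normcE x) (normcE y) -rmorphM. Qed.

Lemma conjC_real (r : R) : conjC ((r%:C)%C : C) = (r%:C)%C.
Proof. by rewrite /conjC conj_Creal //; apply/complex_realP; exists r. Qed.

(* [conjC] is a definition, which hides from [rmorphD] and [rmorphM] the
   ring morphism it unfolds to. *)
Lemma conjCD (x y : C) : conjC (x + y) = conjC x + conjC y.
Proof. exact: rmorphD. Qed.

Lemma conjCM (x y : C) : conjC (x * y) = conjC x * conjC y.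
Proof. exact: rmorphM. Qed.

Lemma conjCK (x : C) : conjC (conjC x) = x.
Proof. exact: Num.Theory.conjCK. Qed.

Lemma normC2_conjC (x : C) : `|x| ^+ 2 = conjC x * x.
Proof. exact: normCKC. Qed.

Lemma expi_pi : expi pi = -1 :> C.
Proof. by rewrite /expi cospi sinpi; apply/eqP; rewrite eq_complex /= oppr0 !eqxx. Qed.

Lemma continuous_real_complex : continuous (fun r : R => (r%:C)%C : C).
Proof.
move=> r; apply/cvgrPdist_lt => _ /[dup] /gtr0_real /complex_realP[e ->].
rewrite ltcR => e0; near=> s; rewrite -rmorphB normc_real ltcR.
by near: s; move: e e0; apply/cvgrPdist_lt; exact: cvg_id.
Unshelve. all: by end_near. Qed.

Lemma continuous_cabs : continuous cabs.
Proof.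
move=> x; apply/(@cvgrPdist_lt _ _ _ _ (nbhs_filter x)) => e e0; near=> y.
rewrite -raddfB -ltcR; apply: le_lt_trans (normc_ge_Re _) _.
apply: le_lt_trans (ler_dist_dist _ _) _.
near: y; apply: (cvgrPdist_lt _ _).1 (@cvg_id _ (nbhs x)) _ _.
by rewrite ltcR.
Unshelve. all: by end_near. Qed.

Lemma continuous_conjC : continuous (@conjC R).
Proof.
move=> x; apply/(@cvgrPdist_lt _ _ _ _ (nbhs_filter x)) => e e0; near=> y.
rewrite /conjC -rmorphB norm_conjC.
by near: y; move: e e0; apply/cvgrPdist_lt; exact: cvg_id.
Unshelve. all: by end_near. Qed.

End ComplexScalars.

Section Starlike.
Context {R : realType} {n : nat}.
Local Notation C := ((R[i])^o).
Implicit Types (S : set 'rV[C]_n) (z : 'rV[C]_n) (t : R).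

Lemma starlike0_scale {S z t} :
  starlike S 0 -> S z -> 0 <= t <= 1 -> S ((t%:C)%C *: z).
Proof. by case=> _ sS Sz /(sS z Sz); rewrite scaler0 add0r. Qed.

Lemma starlike0_of_scale {S} :
  S 0 -> (forall z t, S z -> 0 <= t <= 1 -> S ((t%:C)%C *: z)) ->
  starlike S 0.
Proof. by move=> S0 sS; split=> // z Sz t /(sS z t Sz); rewrite scaler0 add0r. Qed.

Lemma starlike0_closure {S} : starlike S 0 -> starlike (closure S) 0.
Proof.
move=> stS; apply: starlike0_of_scale => [|z t clz t01].
  by apply: subset_closure; case: stS.
have scaleS : S `<=` (fun w => ((t%:C)%C : C) *: w) @^-1` S.
  by move=> w Sw; exact: starlike0_scale.
exact: closure_subset_preimage (@scaler_continuous _ _ _) scaleS _ clz.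
Qed.

End Starlike.

Section RescaleCoefficients.
Context {R : realType}.

Definition rescale_a (t r : R) : R := t * (1 - t * r ^+ 2) / (1 - (t * r) ^+ 2).
Definition rescale_b (t r : R) : R := t * (1 - t) / (1 - (t * r) ^+ 2).

Context {t r : R} (t0 : 0 <= t) (t1 : t <= 1) (r0 : 0 <= r) (r1 : r < 1).

Lemma rescale_denom_gt0 : 0 < 1 - (t * r) ^+ 2.
Proof.
rewrite subr_gt0 exprn_ilt1 ?mulr_ge0 //.
by apply: le_lt_trans r1; rewrite ler_piMl.
Qed.

Lemma rescale_a_ge0 : 0 <= rescale_a t r.
Proof.
have D0 := rescale_denom_gt0.
have tr2 : t * r ^+ 2 <= 1 by rewrite mulr_ile1 ?exprn_ge0 ?exprn_ile1 // ltW.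
by apply: divr_ge0; [apply: mulr_ge0; rewrite ?subr_ge0 | exact: ltW].
Qed.

Lemma rescale_b_ge0 : 0 <= rescale_b t r.
Proof.
have D0 := rescale_denom_gt0.
by apply: divr_ge0; [apply: mulr_ge0; rewrite ?subr_ge0 | exact: ltW].
Qed.

Lemma rescale_ab_le1 : rescale_a t r + rescale_b t r * r <= 1.
Proof.
have D0 := rescale_denom_gt0.
have -> : rescale_a t r + rescale_b t r * r =
    1 - (1 - t) * (1 - t * r) / (1 - (t * r) ^+ 2).
  by rewrite /rescale_a /rescale_b; field; rewrite gt_eqF.
rewrite gerBl; apply: divr_ge0 (ltW D0); apply: mulr_ge0; rewrite subr_ge0 //.
by rewrite mulr_ile1 // ltW.
Qed.

Lemma rescale_abE :
  rescale_a t r + rescale_b t r * t * r ^+ 2 = t /\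
  rescale_b t r + rescale_a t r * t = t.
Proof.
have D0 : 1 - (t * r) ^+ 2 != 0 by rewrite gt_eqF // rescale_denom_gt0.
by split; rewrite /rescale_a /rescale_b; field.
Qed.

End RescaleCoefficients.

Section RescaleBeta.
Context {R : realType}.
Local Notation C := ((R[i])^o).

(* For [u = beta_j], [v = beta_(n-j)] and [q] the last coordinate of [z],
   this is the [beta_j] of [t z]. *)
Definition rescale_beta (t : R) (q u v : C) : C :=
  (rescale_a t (cabs q))%:C%C * u + (rescale_b t (cabs q))%:C%C * conjC v * q.

Context {t : R} {q : C} (t0 : 0 <= t) (t1 : t <= 1) (q1 : cabs q < 1).

Lemma rescale_betaE u v :
  rescale_beta t q u v + conjC (rescale_beta t q v u) * ((t%:C)%C * q) =
  (t%:C)%C * (u + conjC v * q).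
Proof.
have qq : conjC q * q = (cabs q ^+ 2)%:C%C by rewrite -normC2_conjC normcE rmorphXn.
have [ea eb] := rescale_abE t0 t1 (cabs_ge0 q) q1.
rewrite /rescale_beta !(conjCD, conjCM) conjCK !conjC_real.
move: (rescale_a t _) (rescale_b t _) ea eb => a b ea eb.
have {}ea : a%:C%C + b%:C%C * t%:C%C * (conjC q * q) = t%:C%C :> C.
  by rewrite qq -!rmorphM -rmorphD ea.
have {}eb : b%:C%C + a%:C%C * t%:C%C = t%:C%C :> C.
  by rewrite -rmorphM -rmorphD eb.
transitivity (u * (a%:C%C + b%:C%C * t%:C%C * (conjC q * q)) +
              conjC v * q * (b%:C%C + a%:C%C * t%:C%C)); first by ring.
by rewrite ea eb; ring.
Qed.

Lemma rescale_beta_norm u v :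
  `|rescale_beta t q u v| + `|rescale_beta t q v u| <= `|u| + `|v|.
Proof.
have r0 := cabs_ge0 q.
have a0 := rescale_a_ge0 t0 t1 r0 q1; have b0 := rescale_b_ge0 t0 t1 r0 q1.
have ab1 := rescale_ab_le1 t0 t1 r0 q1.
apply: le_trans (lerD (ler_normD _ _) (ler_normD _ _)) _.
rewrite !normrM /conjC !norm_conjC (normcE q) (normcE u) (normcE v).
rewrite !normc_real (ger0_norm a0) (ger0_norm b0) -!rmorphM -!rmorphD lecR.
have := cabs_ge0 u; have := cabs_ge0 v.
move: (rescale_a _ _) (rescale_b _ _) a0 b0 ab1 => a b *; nra.
Qed.

End RescaleBeta.

Section GtildeStarlike.
Context {R : realType} {n : nat}.
Local Notation C := ((R[i])^o).
Implicit Types (z : 'rV[C]_n).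

Lemma vcoordZ (c : C) z k : vcoord (c *: z) k = c * vcoord z k.
Proof. by rewrite /vcoord; case: insub => [i|]; rewrite ?mxE ?mulr0. Qed.

Lemma vcoord0 k : vcoord (0 : 'rV[C]_n) k = 0.
Proof. by rewrite /vcoord; case: insub => [i|]; rewrite ?mxE. Qed.

Lemma Gtilde0 : Gtilde R n 0.
Proof.
split; first by rewrite vcoord0 normr0 ltr01.
exists (fun=> 0) => j jP; rewrite !vcoord0 normr0 mulr0 !addr0 ltr0n bin_gt0.
by split=> //; case/andP: jP; lia.
Qed.

Lemma Gtilde_scale z (t : R) :
  Gtilde R n z -> 0 <= t <= 1 -> Gtilde R n ((t%:C)%C *: z).
Proof.
case=> q1 [beta betaP] /andP[t0 t1].
set q := vcoord z n.-1 in q1 betaP.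
have {}q1 : cabs q < 1 by rewrite -ltcR -normcE.
split.
  rewrite vcoordZ normrM normc_real (normcE q) ger0_norm // -rmorphM.
  rewrite (_ : 1 = (1%:C)%C :> C) // ltcR.
  by apply: le_lt_trans q1; rewrite ler_piMl ?cabs_ge0.
exists (fun j => rescale_beta t q (beta j) (beta (n - j)%N)).
move=> j jP; have [beta_lt yj] := betaP j jP.
rewrite subKn; last by case/andP: jP; lia.
split; first exact: le_lt_trans (rescale_beta_norm t0 t1 q1 _ _) beta_lt.
by rewrite !vcoordZ yj rescale_betaE.
Qed.

Lemma Gtilde_starlike : starlike (Gtilde R n) 0.
Proof. exact: starlike0_of_scale Gtilde0 Gtilde_scale. Qed.

End GtildeStarlike.

Section NotCircular.
Context {R : realType} {n : nat}.
Local Notation C := ((R[i])^o).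
Implicit Types (w : 'rV[C]_n).

Lemma sub_conjC_mul (b b' q : C) :
  (b + conjC b' * q) - conjC (b' + conjC b * q) * q = b * (1 - `|q| ^+ 2).
Proof. by rewrite conjCD conjCM conjCK normC2_conjC; ring. Qed.

(* With [y_1 = vcoord w 0], [y_(n-1) = vcoord w n.-2] and [q = vcoord w n.-1],
   [sub_conjC_mul] turns [gauge w] into [(|beta_1| + |beta_(n-1)|) (1 - |q|^2)
   + n |q|^2] on [Gtilde], which is [< n].  The conjugates make [gauge]
   sensitive to rotations. *)
Definition gauge w : R :=
  cabs (vcoord w 0 - conjC (vcoord w n.-2) * vcoord w n.-1) +
  cabs (vcoord w n.-2 - conjC (vcoord w 0) * vcoord w n.-1) +
  n%:R * cabs (vcoord w n.-1) ^+ 2.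

Lemma continuous_vcoord k : continuous (fun w => vcoord w k).
Proof.
rewrite /vcoord; case: insub => [i|]; last exact: cst_continuous.
exact: coord_continuous.
Qed.

Lemma continuous_gauge : continuous gauge.
Proof.
have cv := continuous_vcoord.
have cd k l w : {for w, continuous (fun w =>
    cabs (vcoord w k - conjC (vcoord w l) * vcoord w n.-1))}.
  apply: continuous_comp (continuous_cabs _).
  apply: (continuousB_cplx w); first exact: cv.
  apply: (continuousM_cplx w); last exact: cv.
  exact: continuous_comp (cv l w) (continuous_conjC _).
move=> w; apply: (continuousD_real w); first by apply: (continuousD_real w); exact: cd.
apply: (continuousM_real w); first exact: cst_continuous.
by apply: (continuousM_real w); apply: continuous_comp (continuous_cabs _); exact: cv.
Qed.

Hypothesis n2 : (2 <= n)%N.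

Lemma Gtilde_gauge w : Gtilde R n w -> gauge w < n%:R.
Proof.
case=> q1 [beta betaP].
have [beta1_lt y1] := betaP 1%N ltac:(lia).
have [_ yl] := betaP n.-1 ltac:(lia).
rewrite (_ : (n - 1)%N = n.-1) in beta1_lt y1; last by lia.
rewrite (_ : (n - n.-1)%N = 1%N) in yl; last by lia.
set q := vcoord w n.-1 in q1 y1 yl *.
have q2E : 1 - `|q| ^+ 2 = (1 - cabs q ^+ 2)%:C%C.
  by rewrite normcE rmorphB rmorph1 rmorphXn.
rewrite /gauge y1 yl !sub_conjC_mul q2E !cabsM cabs_real.
rewrite bin1 (normcE (beta 1%N)) (normcE (beta n.-1)) -rmorphD in beta1_lt.
rewrite -(rmorph_nat (real_complex R)) ltcR in beta1_lt.
have {}q1 : cabs q < 1 by rewrite -ltcR -normcE.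
have Q0 := cabs_ge0 q; have B10 := cabs_ge0 (beta 1%N).
have Bl0 := cabs_ge0 (beta n.-1).
have Q2 : cabs q ^+ 2 < 1 by rewrite exprn_ilt1.
rewrite ger0_norm; last by rewrite subr_ge0 ltW.
nra.
Qed.

Lemma Gammatilde_gauge w : Gammatilde R n w -> gauge w <= n%:R.
Proof.
have GB : Gtilde R n `<=` gauge @^-1` [set x | x <= n%:R].
  by move=> v /Gtilde_gauge /ltW.
move=> /(closure_subset_preimage continuous_gauge GB).
by rewrite -((closure_id _).1 (@closed_le R n%:R)).
Qed.

(* [(y_1, ..., y_(n-1), q) = (3n/8, 0, ..., 0, 3n/8, 1/2)]: take
   [beta_1 = beta_(n-1) = n/4] and all other [beta_j = 0]. *)
Definition witness_coord (k : nat) : R :=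
  if k == n.-1 then 2^-1 else
  if (k == 0%N) || (k == n.-2) then 3 * n%:R / 8 else 0.

Definition gauge_witness : 'rV[C]_n := \row_(i < n) (witness_coord i)%:C%C.

Lemma vcoord_witness k : (k < n)%N -> vcoord gauge_witness k = (witness_coord k)%:C%C.
Proof.
by move=> kn; rewrite /vcoord; case: insubP => [i _ <-|]; rewrite ?mxE ?kn.
Qed.

Lemma Gtilde_gauge_witness : Gtilde R n gauge_witness.
Proof.
have n0 : (0 : R) < n%:R by rewrite ltr0n; lia.
split.
  rewrite vcoord_witness /witness_coord; last by lia.
  rewrite eqxx normc_real ger0_norm ?invr_ge0 ?ler0n // (_ : 1 = (1%:C)%C :> C) //.
  by rewrite ltcR invf_lt1 ?ltr0n // ltr1n.
exists (fun j => (if (j == 1%N) || (j == n.-1) then n%:R / 4 else 0)%:C%C).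
move=> j /[dup] jP /andP[j1 jn].
have jsym : ((n - j)%N == 1%N) || ((n - j)%N == n.-1) = (j == 1%N) || (j == n.-1).
  by apply/idP/idP => /orP[] /eqP ?; apply/orP; lia.
rewrite jsym !vcoord_witness /witness_coord; try lia.
rewrite !normc_real -rmorphD -(rmorph_nat (real_complex R)) ltcR.
rewrite conjC_real -(rmorphM (real_complex R)) -(rmorphD (real_complex R)).
rewrite eqxx (_ : (j.-1 == n.-1) = false); last by apply/eqP; lia.
rewrite (_ : (j.-1 == 0%N) || (j.-1 == n.-2) = (j == 1%N) || (j == n.-1)); last first.
  by apply/idP/idP => /orP[] /eqP ?; apply/orP; lia.
case: ifP => j_end; split.
- have -> : 'C(n, j) = n.
    by case/orP: j_end => /eqP ->; rewrite ?bin1 // -subn1 bin_sub ?bin1 //; lia.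
  by rewrite ger0_norm ?divr_ge0 ?ler0n //; lra.
- by congr (_%:C)%C; field.
- by rewrite normr0 addr0 ltr0n bin_gt0; lia.
- by rewrite mul0r addr0.
Qed.

Lemma gauge_neg_witness : n%:R < gauge (- gauge_witness).
Proof.
have n0 : (0 : R) < n%:R by rewrite ltr0n; lia.
have wE k : (k < n)%N -> vcoord (- gauge_witness) k = (- witness_coord k)%:C%C.
  by move=> kn; rewrite -scaleN1r vcoordZ vcoord_witness // mulN1r rmorphN.
rewrite /gauge !wE; try lia.
rewrite /witness_coord (_ : (0 == n.-1) = false); last by apply/eqP; lia.
rewrite (_ : (n.-2 == n.-1) = false); last by apply/eqP; lia.
rewrite !eqxx orbT /= conjC_real -(rmorphM (real_complex R)).
rewrite -(rmorphB (real_complex R)) !cabs_real.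
have -> : - (3 * n%:R / 8) - - (3 * n%:R / 8) * - 2^-1 = - (9 * n%:R / 16) :> R.
  by field.
rewrite !normrN !ger0_norm ?divr_ge0 ?invr_ge0 ?mulr_ge0 ?ler0n //.
lra.
Qed.

Lemma not_circular_between {S : set 'rV[C]_n} :
  Gtilde R n `<=` S -> S `<=` Gammatilde R n -> ~ circular S.
Proof.
move=> GS SG circS; have := SG _ (circS _ (GS _ Gtilde_gauge_witness) pi).
rewrite expi_pi scaleN1r => /Gammatilde_gauge.
by rewrite leNgt gauge_neg_witness.
Qed.

End NotCircular.

(* Split the innermost [min]/[max] first, so that every case hypothesis is free
   of [min]/[max] and usable by [lra]/[nra]. *)
Ltac innermost_minmax t := lazymatch t with
  | context [Order.max _ _] => fail
  | context [Order.min _ _] => fail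
  | _ => idtac
  end.
Ltac case_minmax := repeat match goal with
  | |- context [Order.max ?a ?b] =>
      innermost_minmax a; innermost_minmax b; case: (leP a b) => ?
  | |- context [Order.min ?a ?b] =>
      innermost_minmax a; innermost_minmax b; case: (leP a b) => ?
  end.

Section ContractionCoefficients.
Context {R : realType}.
Implicit Types s t : R.

Definition ramp t : R := Num.max 0 (2 * t - 1).
Definition stretch s t : R := Num.max 0 (Num.min 1 (2^-1 + (s - 2^-1) * (1 + t))).
Definition fade s t : R :=
  Num.max 0 (Num.min 1 (2 - 2 * t) - 16 * t * Num.min s (1 - s)).

Lemma ramp_le_half t : t <= 2^-1 -> ramp t = 0.
Proof. by rewrite /ramp; case_minmax; lra. Qed.

Lemma ramp_01 {t} : t <= 1 -> 0 <= ramp t <= 1.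
Proof. by rewrite /ramp; case_minmax; lra. Qed.

Lemma ramp1 : ramp 1 = 1.
Proof. by rewrite /ramp; case_minmax; lra. Qed.

Lemma stretch_01 s t : 0 <= stretch s t <= 1.
Proof. by rewrite /stretch; case_minmax; lra. Qed.

Lemma stretch_t0 s : 0 <= s <= 1 -> stretch s 0 = s.
Proof. by rewrite /stretch; case_minmax; lra. Qed.

Lemma stretch_s0 t : 0 <= t -> stretch 0 t = 0.
Proof. by rewrite /stretch; case_minmax; lra. Qed.

Lemma stretch_s1 t : 0 <= t -> stretch 1 t = 1.
Proof. by rewrite /stretch; case_minmax; lra. Qed.

Lemma fade_01 {s t} : 0 <= s <= 1 -> 0 <= t -> 0 <= fade s t <= 1.
Proof. by rewrite /fade; case_minmax; nra. Qed.

Lemma fade_t0 s : fade s 0 = 1.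
Proof. by rewrite /fade; case_minmax; lra. Qed.

Lemma fade_t1 s : 0 <= s <= 1 -> fade s 1 = 0.
Proof. by rewrite /fade; case_minmax; lra. Qed.

Lemma fade_ramp_end s t : s = 0 \/ s = 1 -> t <= 1 -> fade s t + ramp t = 1.
Proof. by case=> ->; rewrite /fade /ramp; case_minmax; lra. Qed.

Lemma fade_ramp_overlap {s t} : 0 <= s <= 1 -> t <= 1 ->
  0 < fade s t -> 0 < ramp t ->
  (stretch s t = 0 \/ stretch s t = 1) /\ fade s t + ramp t <= 1.
Proof. by rewrite /fade /ramp /stretch; case_minmax; nra. Qed.

Lemma continuous_ramp : continuous ramp.
Proof.
move=> t; apply: (continuous_max_real t); first exact: cst_continuous.
apply: (continuousB_real t); last exact: cst_continuous.
by apply: (continuousM_real t); [exact: cst_continuous | exact: cvg_id].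
Qed.

Lemma continuous_stretch : continuous (fun p : R * R => stretch p.1 p.2).
Proof.
move=> p; apply: (continuous_max_real p); first exact: cst_continuous.
apply: (continuous_min_real p); first exact: cst_continuous.
apply: (continuousD_real p); first exact: cst_continuous.
apply: (continuousM_real p).
  by apply: (continuousB_real p); [exact: cvg_fst | exact: cst_continuous].
by apply: (continuousD_real p); [exact: cst_continuous | exact: cvg_snd].
Qed.

Lemma continuous_fade : continuous (fun p : R * R => fade p.1 p.2).
Proof.
move=> p; apply: (continuous_max_real p); first exact: cst_continuous.
apply: (continuousB_real p).
  apply: (continuous_min_real p); first exact: cst_continuous.
  apply: (continuousB_real p); first exact: cst_continuous.
  by apply: (continuousM_real p); [exact: cst_continuous | exact: cvg_snd].
apply: (continuousM_real p).
  by apply: (continuousM_real p); [exact: cst_continuous | exact: cvg_snd].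
apply: (continuous_min_real p); first exact: cvg_fst.
by apply: (continuousB_real p); [exact: cst_continuous | exact: cvg_fst].
Qed.

End ContractionCoefficients.

Section StarlikePath.
Context {R : realType} {n : nat}.
Local Notation C := ((R[i])^o).
Context {S : set 'rV[C]_n} (stS : starlike S 0).

Lemma starlike0_path x y : S x -> S y ->
  exists f : R -> 'rV[C]_n,
    {within `[0, 1], continuous f} /\ f 0 = x /\ f 1 = y /\
    (forall s, s \in `[0, 1] -> S (f s)).
Proof.
move=> Sx Sy; exists (fun s => (ramp (1 - s))%:C%C *: x + (ramp s)%:C%C *: y).
have ramp0 : ramp 0 = 0 :> R by rewrite ramp_le_half.
split.
  apply: continuous_subspaceT => s.
  apply: (continuousD_vec s); apply: (continuousZ_vec s); try exact: cst_continuous.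
    apply: continuous_comp (continuous_real_complex _).
    apply: continuous_comp (continuous_ramp _).
    by apply: (continuousB_real s); [exact: cst_continuous | exact: cvg_id].
  exact: continuous_comp (continuous_ramp _) (continuous_real_complex _).
rewrite subr0 subrr ramp1 ramp0 rmorph0 rmorph1 !scale0r !scale1r addr0 add0r.
do 2!split=> //; move=> s; rewrite in_itv /= => /andP[s0 s1].
have [s_le|s_gt] := lerP s 2^-1.
  rewrite (ramp_le_half _ s_le) rmorph0 scale0r addr0.
  by apply: starlike0_scale stS Sx _; apply: ramp_01; lra.
rewrite (ramp_le_half (1 - s)); last by lra.
rewrite rmorph0 scale0r add0r.
by apply: starlike0_scale stS Sy _; apply: ramp_01.
Qed.

End StarlikePath.

Section LoopContraction.
Context {R : realType} {n : nat}.
Local Notation C := ((R[i])^o).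

(* For [t <= 1/2] the loop is pulled to [0] away from its ends by [fade] while
   [stretch] reparametrises it; for [t >= 1/2] the weight [ramp t] moves onto
   [g 0].  Where both weights are positive, [stretch] is already [0] or [1]
   ([fade_ramp_overlap]), so every value scales a point of the loop. *)
Definition loop_contraction (g : R -> 'rV[C]_n) (p : R * R) : 'rV[C]_n :=
  (fade p.1 p.2)%:C%C *: g (stretch p.1 p.2) + (ramp p.2)%:C%C *: g 0.

Context {S : set 'rV[C]_n} (stS : starlike S 0).
Context {g : R -> 'rV[C]_n} (gc : {within `[0, 1], continuous g}) (g01 : g 0 = g 1)
  (gS : forall s, s \in `[0, 1] -> S (g s)).

Lemma continuous_loop_contraction : continuous (loop_contraction g).
Proof.
have stretch_in (p : R * R) : `[0, 1]%classic (stretch p.1 p.2).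
  by rewrite /= in_itv stretch_01.
move=> p; apply: (continuousD_vec p); apply: (continuousZ_vec p).
- exact: continuous_comp (continuous_fade _) (continuous_real_complex _).
- exact: continuous_comp_within gc continuous_stretch stretch_in p.
- apply: continuous_comp (continuous_real_complex _).
  exact: continuous_comp cvg_snd (continuous_ramp _).
- exact: cst_continuous.
Qed.

Lemma loop_contraction_t0 s : 0 <= s <= 1 -> loop_contraction g (s, 0) = g s.
Proof.
move=> s01; rewrite /loop_contraction /= fade_t0 stretch_t0 // ramp_le_half; last by lra.
by rewrite rmorph1 rmorph0 scale1r scale0r addr0.
Qed.

Lemma loop_contraction_t1 s : 0 <= s <= 1 -> loop_contraction g (s, 1) = g 0.
Proof.
move=> s01; rewrite /loop_contraction /= fade_t1 // ramp1.
by rewrite rmorph1 rmorph0 scale1r scale0r add0r.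
Qed.

Lemma loop_contraction_end s t : s = 0 \/ s = 1 -> 0 <= t <= 1 ->
  loop_contraction g (s, t) = g 0.
Proof.
move=> s_end /andP[t0 t1]; rewrite /loop_contraction /=.
have -> : g (stretch s t) = g 0.
  by case: s_end => ->; rewrite ?stretch_s0 ?stretch_s1 // g01.
by rewrite -scalerDl -rmorphD fade_ramp_end // rmorph1 scale1r.
Qed.

Lemma loop_contraction_in p : p \in `[0, 1] `*` `[0, 1] -> S (loop_contraction g p).
Proof.
case: p => s t; rewrite in_setE /= !in_itv /= => -[s01 /andP[t0 t1]].
have [f0 f1] := andP (fade_01 s01 t0); have [r0 r1] := andP (ramp_01 t1).
have gsS : S (g (stretch s t)) by apply: gS; rewrite in_itv /= stretch_01.
have g0S : S (g 0) by apply: gS; rewrite in_itv /= lexx ler01.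
rewrite /loop_contraction /=.
have [r_eq0|r_neq0] := eqVneq (ramp t) 0.
  by rewrite r_eq0 rmorph0 scale0r addr0; apply: starlike0_scale stS gsS _; rewrite f0.
have [f_eq0|f_neq0] := eqVneq (fade s t) 0.
  by rewrite f_eq0 rmorph0 scale0r add0r; apply: starlike0_scale stS g0S _; rewrite r0.
have f_gt0 : 0 < fade s t by rewrite lt_def f_neq0.
have r_gt0 : 0 < ramp t by rewrite lt_def r_neq0.
have [st_end fr1] := fade_ramp_overlap s01 t1 f_gt0 r_gt0.
have -> : g (stretch s t) = g 0 by case: st_end => ->; rewrite // g01.
rewrite -scalerDl -rmorphD; apply: starlike0_scale stS g0S _.
by rewrite fr1 addr_ge0.
Qed.

End LoopContraction.

Lemma starlike0_simply_connected {R : realType} {n : nat}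
    {S : set 'rV[(R[i])^o]_n} :
  starlike S 0 -> simply_connected S.
Proof.
move=> stS; split; first by exists 0; case: stS.
split; first exact: starlike0_path.
move=> g gc g01 gS; exists (loop_contraction g).
split; first exact: continuous_subspaceT (continuous_loop_contraction gc).
split.
  move=> s; rewrite in_itv /= => s01.
  by rewrite loop_contraction_t0 // loop_contraction_t1 //.
split; last exact: loop_contraction_in.
move=> t; rewrite in_itv /= => t01.
by split; rewrite (loop_contraction_end g01) //; [left | right].
Qed.

Theorem mainTheorem6 (R : realType) (n : nat) (hn : (2 <= n)%N) :
  starlike (Gtilde R n) 0 /\ starlike (Gammatilde R n) 0 /\
  ~ circular (Gtilde R n) /\ ~ circular (Gammatilde R n) /\
  simply_connected (Gtilde R n).
Proof.
have GsubG : Gtilde R n `<=` Gammatilde R n := @subset_closure _ _.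
have Gstar := @Gtilde_starlike R n.
split; first exact: Gstar.
split; first exact: starlike0_closure Gstar.
split; first exact (not_circular_between hn (@subset_refl _ _) GsubG).
split; first exact (not_circular_between hn GsubG (@subset_refl _ _)).
exact: starlike0_simply_connected Gstar.
Qed.
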